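(* Let $(A,\circ,[\cdot,\cdot])$ be a finite-dimensional dual pre-Poisson algebra and let $r\in A\otimes A$ be symmetric and nondegenerate. Let $\mathcal{B}(x,y)=\langle\tilde r^{-1}(x),y\rangle$ for $x,y\in A$. Then $r$ is a solution of the permutative-Leibniz Yang–Baxter equation if and only if, for all $x,y,z\in A$, $$\mathcal{B}(x\circ y,z)=\mathcal{B}(y,x\circ z)+\mathcal{B}(x,y\blacksquare z),\qquad \mathcal{B}([x,y],z)=-\mathcal{B}(y,[x,z])+\mathcal{B}(x,y\square z).$$
   Context: Field $\mathbb{F}$ of characteristic $0$. Dual pre-Poisson algebra: $x\circ(y\circ z)=(x\circ y)\circ z=(y\circ x)\circ z$; $[x,[y,z]]=[[x,y],z]+[y,[x,z]]$; $[x,y\circ z]=[x,y]\circ z+y\circ[x,z]$; $[x\circ y,z]=x\circ[y,z]+y\circ[x,z]$; $[x,y]\circ z=-[y,x]\circ z$. $x\blacksquare y=x\circ y-y\circ x$, $x\square y=[x,y]+[y,x]$. $\tilde r:A^*\to A$ is $\langle\tilde r(u^* ),v^*\rangle=\langle r,u^*\otimes v^*\rangle$; $r$ nondegenerate means $\tilde r$ invertible; symmetric means flip-invariant. PLYBE: for $r=\sum_i a_i\otimes b_i$, $\mathbf{P}(r)=\sum_{i,j}\big(a_i\otimes a_j\otimes b_i\circ b_j-a_i\otimes b_i\circ a_j\otimes b_j+a_i\blacksquare a_j\otimes b_j\otimes b_i\big)$, $\mathbf{L}(r)=\sum_{i,j}\big(a_i\otimes a_j\otimes[b_i,b_j]+a_i\otimes[b_i,a_j]\otimes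 b_j-a_i\square a_j\otimes b_i\otimes b_j\big)$; $r$ is a solution if $\mathbf{P}(r)=\mathbf{L}(r)=0$. *)

From HB Require Import structures.
From mathcomp Require Import all_boot all_order all_algebra.
Set Implicit Arguments. Unset Strict Implicit. Unset Printing Implicit Defensive.
Import Order.TTheory GRing.Theory Num.Theory.
Local Open Scope ring_scope.

(* A finite-dimensional F-vector space of dimension n is represented by the
   coordinate space 'rV[F]_n (row vectors); its dual A^* is identified with
   'rV[F]_n via the dual basis, the pairing being <x, f> = sum_i x_i f_i. *)
Section DPP.
Variables (F : fieldType) (n : nat).
Local Notation A := 'rV[F]_n.

Definition pairing (x f : A) : F := (x *m f^T) 0 0.

Definition bilinear_op (op : A -> A -> A) : Prop :=
  (forall (a : F) x y z, op (a *: x + y) z = a *: op x z + op y z) /\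
  (forall (a : F) x y z, op x (a *: y + z) = a *: op x y + op x z).

Definition dual_pre_Poisson (circ br : A -> A -> A) : Prop :=
  bilinear_op circ /\ bilinear_op br /\
      (forall x y z, circ x (circ y z) = circ (circ x y) z /\
                     circ (circ x y) z = circ (circ y x) z) /\
      (forall x y z, br x (br y z) = br (br x y) z + br y (br x z)) /\
      (forall x y z, br x (circ y z) = circ (br x y) z + circ y (br x z)) /\
      (forall x y z, br (circ x y) z = circ x (br y z) + circ y (br x z)) /\
      (forall x y z, circ (br x y) z = - circ (br y x) z).

Definition bsq (circ : A -> A -> A) x y := circ x y - circ y x.
Definition ssq (br : A -> A -> A) x y := br x y + br y x.

(* 3-tensors in A ⊗ A ⊗ A, in coordinates *)
Definition tensor3 (u v w : A) (i j k : 'I_n) : F := u 0 i * v 0 j * w 0 k.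

(* P(r) and L(r) for r = sum_{l < m} a l ⊗ b l *)
Definition Pten (circ : A -> A -> A) m (a b : 'I_m -> A) (i j k : 'I_n) : F :=
  \sum_(p < m) \sum_(q < m)
    (tensor3 (a p) (a q) (circ (b p) (b q)) i j k
     - tensor3 (a p) (circ (b p) (a q)) (b q) i j k
     + tensor3 (bsq circ (a p) (a q)) (b q) (b p) i j k).

Definition Lten (br : A -> A -> A) m (a b : 'I_m -> A) (i j k : 'I_n) : F :=
  \sum_(p < m) \sum_(q < m)
    (tensor3 (a p) (a q) (br (b p) (b q)) i j k
     + tensor3 (a p) (br (b p) (a q)) (b q) i j k
     - tensor3 (ssq br (a p) (a q)) (b p) (b q) i j k).

(* A 2-tensor r ∈ A ⊗ A is given by its coefficient matrix R:
   r = sum_{i,j} R i j e_i ⊗ e_j = sum_i e_i ⊗ (row i R). *)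
Definition tensor_of m (a b : 'I_m -> A) : 'M[F]_n :=
  \sum_(p < m) (a p)^T *m (b p).

Definition std_a (i : 'I_n) : A := delta_mx 0 i.
Definition std_b (R : 'M[F]_n) (i : 'I_n) : A := row i R.

(* r is a solution of the PLYBE (computed on the decomposition
   r = sum_i e_i ⊗ row_i R; P, L do not depend on the decomposition). *)
Definition PLYBE_solution (circ br : A -> A -> A) (R : 'M[F]_n) : Prop :=
  (forall i j k, Pten circ (@std_a) (std_b R) i j k = 0) /\
  (forall i j k, Lten br (@std_a) (std_b R) i j k = 0).

(* r~ : A^* -> A,  <r~(u), v> = <r, u ⊗ v> = u R v^T *)
Definition rtilde (R : 'M[F]_n) (u : A) : A := u *m R.

Definition symmetric_tensor (R : 'M[F]_n) : Prop := R^T = R.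
Definition nondegenerate_tensor (R : 'M[F]_n) : Prop := R \in unitmx.

Definition rtilde_inv (R : 'M[F]_n) (x : A) : A := x *m invmx R.

Definition Bform (R : 'M[F]_n) (x y : A) : F := pairing (rtilde_inv R x) y.

End DPP.

From mathcomp Require Import all_boot all_order all_algebra.
From mathcomp Require Import ring.
Set Implicit Arguments.
Unset Strict Implicit.
Unset Printing Implicit Defensive.
Import GRing.Theory.
Local Open Scope ring_scope.

(* The rows r_i = e_i R of the invertible matrix R form a basis of A that is
   B-dual to the coordinates: B(u, r_k) = u_k.  Expanding P(r) and L(r) along
   r = sum_i e_i ⊗ r_i and using the symmetry of R, the (i,j,k) coefficient of
   P(r) (resp. L(r)) is the defect of the first (resp. second) identity at
   (r_i, r_j, r_k).  Both defects are trilinear, so they vanish identically iff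
   they vanish on this basis. *)

Section Multilinear.
Variables (F : fieldType) (n : nat).
Local Notation V := 'rV[F]_n.

Definition linear_form (f : V -> F) : Prop :=
  forall a x y, f (a *: x + y) = a * f x + f y.

Definition trilinear_form (f : V -> V -> V -> F) : Prop :=
  [/\ forall y z, linear_form (fun x => f x y z),
      forall x z, linear_form (fun y => f x y z) &
      forall x y, linear_form (f x y)].

Lemma linear_form0 f : linear_form f -> f 0 = 0.
Proof.
move=> lin_f; have := lin_f 1 0 0; rewrite scaler0 addr0 mul1r => f0.
by apply: (addrI (f 0)); rewrite addr0 -f0.
Qed.

Lemma linear_form_eq0 (R : 'M[F]_n) f :
  R \in unitmx -> linear_form f -> (forall i, f (row i R) = 0) -> forall x, f x = 0.
Proof.
move=> unitR lin_f f_row x; rewrite -(mulmxKV unitR x) mulmx_sum_row.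
elim/big_rec: _ => [|i s _ fs0]; first exact: linear_form0.
by rewrite lin_f f_row fs0 mulr0 addr0.
Qed.

Lemma trilinear_form_eq0 (R : 'M[F]_n) f :
  R \in unitmx -> trilinear_form f ->
  (forall i j k, f (row i R) (row j R) (row k R) = 0) ->
  forall x y z, f x y z = 0.
Proof.
move=> unitR [lin1 lin2 lin3] f_rows x y z.
apply: (linear_form_eq0 unitR (lin1 y z) _ x) => i.
apply: (linear_form_eq0 unitR (lin2 _ z) _ y) => j.
exact: (linear_form_eq0 unitR (lin3 _ _) _ z).
Qed.

End Multilinear.

Section BilinearOps.
Variables (F : fieldType) (n : nat).
Local Notation V := 'rV[F]_n.
Implicit Types (op : V -> V -> V) (R : 'M[F]_n).

Lemma bilinear_op0l op z : bilinear_op op -> op 0 z = 0.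
Proof.
move=> [linl _]; have := linl 1 0 0 z; rewrite scaler0 addr0 scale1r => op0.
by apply: (addrI (op 0 z)); rewrite addr0 -op0.
Qed.

Lemma bilinear_op0r op z : bilinear_op op -> op z 0 = 0.
Proof.
move=> [_ linr]; have := linr 1 z 0 0; rewrite scaler0 addr0 scale1r => op0.
by apply: (addrI (op z 0)); rewrite addr0 -op0.
Qed.

Lemma bilinear_op_sumr op m (c : 'I_m -> F) (x : 'I_m -> V) z :
  bilinear_op op -> op z (\sum_(i < m) c i *: x i) = \sum_(i < m) c i *: op z (x i).
Proof.
move=> bil; elim/big_rec2: _ => [|i s t _ <-]; first exact: bilinear_op0r.
by rewrite bil.2.
Qed.

Lemma bilinear_op_suml op m (c : 'I_m -> F) (x : 'I_m -> V) z :
  bilinear_op op -> op (\sum_(i < m) c i *: x i) z = \sum_(i < m) c i *: op (x i) z.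
Proof.
move=> bil; elim/big_rec2: _ => [|i s t _ <-]; first exact: bilinear_op0l.
by rewrite bil.1.
Qed.

Lemma bilinear_op_coord op u v l : bilinear_op op ->
  op u v 0 l = \sum_(p < n) \sum_(q < n) u 0 p * v 0 q * op (std_a F p) (std_a F q) 0 l.
Proof.
move=> bil; rewrite {1}(row_sum_delta u) {1}(row_sum_delta v) bilinear_op_suml //.
rewrite summxE; apply: eq_bigr => p _; rewrite bilinear_op_sumr // !mxE summxE.
by rewrite mulr_sumr; apply: eq_bigr => q _; rewrite !mxE mulrA.
Qed.

Lemma bilinear_bsq op : bilinear_op op -> bilinear_op (bsq op).
Proof. by move=> [linl linr]; split=> a x y z; rewrite /bsq linl linr scalerBr addrACA opprD. Qed.

Lemma bilinear_ssq op : bilinear_op op -> bilinear_op (ssq op).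
Proof. by move=> [linl linr]; split=> a x y z; rewrite /ssq linl linr scalerDr addrACA. Qed.

Lemma bsq_antisym op u v : bsq op u v = - bsq op v u.
Proof. by rewrite /bsq opprB. Qed.

End BilinearOps.

Section Compatibility.
Variables (F : fieldType) (n : nat) (R : 'M[F]_n).
Hypotheses (unitR : R \in unitmx) (symR : R^T = R).
Local Notation V := 'rV[F]_n.
Implicit Types (op : V -> V -> V) (x y z : V).

Lemma BformDl a x y z : Bform R (a *: x + y) z = a * Bform R x z + Bform R y z.
Proof. by rewrite /Bform /pairing /rtilde_inv !mulmxDl -!scalemxAl !mxE. Qed.

Lemma BformDr a x y z : Bform R x (a *: y + z) = a * Bform R x y + Bform R x z.
Proof. by rewrite /Bform /pairing linearD linearZ /= mulmxDr -scalemxAr !mxE. Qed.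

Lemma BformC x y : Bform R x y = Bform R y x.
Proof.
rewrite /Bform /pairing /rtilde_inv.
transitivity ((y *m invmx R *m x^T)^T 0 0); last by rewrite mxE.
by rewrite !trmx_mul trmxK trmx_inv symR mulmxA.
Qed.

Lemma Bform_rowl i y : Bform R (row i R) y = y 0 i.
Proof. by rewrite /Bform /pairing /rtilde_inv rowE mulmxK // -rowE !mxE. Qed.

Lemma Bform_rowr x i : Bform R x (row i R) = x 0 i.
Proof. by rewrite BformC Bform_rowl. Qed.

Lemma row_coordC i j : row i R 0 j = row j R 0 i.
Proof. by rewrite !mxE -[in RHS]symR mxE. Qed.

Definition compatibility_defect (s : F) op op' x y z :=
  Bform R (op x y) z - s * Bform R y (op x z) - Bform R x (op' y z).

Lemma compatibility_defect_eq0 s op op' x y z :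
  compatibility_defect s op op' x y z = 0 <->
  Bform R (op x y) z = s * Bform R y (op x z) + Bform R x (op' y z).
Proof.
rewrite /compatibility_defect -addrA -opprD.
by split=> [/eqP|->]; [rewrite subr_eq0 => /eqP | exact: subrr].
Qed.

Lemma trilinear_compatibility_defect s op op' :
  bilinear_op op -> bilinear_op op' -> trilinear_form (compatibility_defect s op op').
Proof.
move=> [opl opr] [op'l op'r].
split=> ? ? a ? ?;
  by rewrite /compatibility_defect ?opl ?opr ?op'l ?op'r ?BformDl ?BformDr; ring.
Qed.

Lemma compatibility_defect_rows s op op' i j k :
  compatibility_defect s op op' (row i R) (row j R) (row k R) =
  op (row i R) (row j R) 0 k - s * op (row i R) (row k R) 0 j - op' (row j R) (row k R) 0 i.
Proof. by rewrite /compatibility_defect Bform_rowr !Bform_rowl. Qed.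

End Compatibility.

Section TensorCoordinates.
Variables (F : fieldType) (n : nat) (R : 'M[F]_n).
Hypotheses (unitR : R \in unitmx) (symR : R^T = R).
Local Notation V := 'rV[F]_n.
Local Notation e := (@std_a F n).
Local Notation r i := (row i R).
Implicit Types (op : V -> V -> V).

Lemma sum_std_a_coord i (G : 'I_n -> F) : \sum_(p < n) e p 0 i * G p = G i.
Proof.
rewrite (bigD1 i) //= big1 => [|p /negbTE neq_pi]; first by rewrite !mxE !eqxx mul1r addr0.
by rewrite !mxE eq_sym neq_pi mul0r.
Qed.

Lemma sum_tensor3_std_std op i j k :
  \sum_(p < n) \sum_(q < n) tensor3 (e p) (e q) (op (r p) (r q)) i j k = op (r i) (r j) 0 k.
Proof.
under eq_bigr => p _ do under eq_bigr => q _ do rewrite /tensor3 -mulrA.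
under eq_bigr => p _ do rewrite -mulr_sumr sum_std_a_coord.
exact: sum_std_a_coord.
Qed.

Lemma sum_tensor3_std_op op i j k : bilinear_op op ->
  \sum_(p < n) \sum_(q < n) tensor3 (e p) (op (r p) (e q)) (r q) i j k = op (r i) (r k) 0 j.
Proof.
move=> bil.
under eq_bigr => p _ do under eq_bigr => q _ do rewrite /tensor3 -mulrA.
under eq_bigr => p _ do rewrite -mulr_sumr.
rewrite sum_std_a_coord {1}(row_sum_delta (r k)) bilinear_op_sumr // summxE.
by apply: eq_bigr => q _; rewrite [RHS]mxE row_coordC // mulrC.
Qed.

Lemma Pten_std circ i j k : bilinear_op circ ->
  Pten circ e (std_b R) i j k =
  compatibility_defect R 1 circ (bsq circ) (r i) (r j) (r k).
Proof.
move=> bil; rewrite compatibility_defect_rows // mul1r /Pten /std_b.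
under eq_bigr => p _ do rewrite !big_split /= sumrN.
rewrite !big_split /= sumrN sum_tensor3_std_std sum_tensor3_std_op //.
congr (_ - _ + _); rewrite bsq_antisym [in RHS]mxE opprK.
rewrite (bilinear_op_coord _ _ _ (bilinear_bsq bil)).
apply: eq_bigr => p _; apply: eq_bigr => q _.
by rewrite /tensor3 (row_coordC symR q j) (row_coordC symR p k); ring.
Qed.

Lemma Lten_std br i j k : bilinear_op br ->
  Lten br e (std_b R) i j k =
  compatibility_defect R (-1) br (ssq br) (r i) (r j) (r k).
Proof.
move=> bil; rewrite compatibility_defect_rows // mulN1r opprK /Lten /std_b.
under eq_bigr => p _ do rewrite !big_split /= sumrN.
rewrite !big_split /= sumrN sum_tensor3_std_std sum_tensor3_std_op //.
congr (_ + _ - _); rewrite (bilinear_op_coord _ _ _ (bilinear_ssq bil)).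
apply: eq_bigr => p _; apply: eq_bigr => q _.
by rewrite /tensor3 (row_coordC symR p j) (row_coordC symR q k); ring.
Qed.

End TensorCoordinates.

Theorem proposition3p22 (F : fieldType) (n : nat)
  (charF0 : [pchar F] =i pred0)
  (circ br : 'rV[F]_n -> 'rV[F]_n -> 'rV[F]_n)
  (hA : dual_pre_Poisson circ br)
  (R : 'M[F]_n) (hsym : symmetric_tensor R) (hnd : nondegenerate_tensor R) :
  PLYBE_solution circ br R <->
  (forall x y z,
     Bform R (circ x y) z = Bform R y (circ x z) + Bform R x (bsq circ y z)) /\
  (forall x y z,
     Bform R (br x y) z = - Bform R y (br x z) + Bform R x (ssq br y z)).
Proof.
have [bil_circ [bil_br _]] := hA.
have Pdefect := Pten_std hnd hsym _ _ _ bil_circ.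
have Ldefect := Lten_std hnd hsym _ _ _ bil_br.
have trilinP := trilinear_compatibility_defect R 1 bil_circ (bilinear_bsq bil_circ).
have trilinL := trilinear_compatibility_defect R (-1) bil_br (bilinear_ssq bil_br).
split=> [[P0 L0] | [compat_circ compat_br]].
- split=> x y z.
  + rewrite -[Bform R y _]mul1r; apply/compatibility_defect_eq0.
    by apply: (trilinear_form_eq0 hnd trilinP) => i j k; rewrite -Pdefect.
  + rewrite -mulN1r; apply/compatibility_defect_eq0.
    by apply: (trilinear_form_eq0 hnd trilinL) => i j k; rewrite -Ldefect.
- split=> i j k; [rewrite Pdefect | rewrite Ldefect]; apply/compatibility_defect_eq0.
  + by rewrite mul1r.
  + by rewrite mulN1r.
Qed.
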